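(* Let $a,b,c\in\mathbb{R}$ with $c\neq0$. Let $\theta_\pm$ be the roots of the quadratic $-3c\theta^2+\sqrt3(a-b)\theta+(a+b+c)$, and let $\theta_1,\theta_2,\theta_3$ be the roots of the cubic $-3c\theta^3+\sqrt3(a-b)\theta^2+(4a+4b+c)\theta+\sqrt3(a-b)$, assumed pairwise distinct. For $(u,v,w)$ with $u,v,w$ pairwise distinct put $\theta(u,v,w)=\frac{u+v-2w}{\sqrt3(u-v)}$, and let $\Omega\subset\mathbb{R}^3$ be a connected open set on which $u,v,w$ are pairwise distinct and $\theta\neq\theta_1,\theta_2,\theta_3$, with continuous branches of the logarithms below chosen on $\Omega$. Define $$\begin{aligned}h(u,v,w)={}&(\theta_1-\theta_2)(\theta_2-\theta_3)(\theta_3-\theta_1)\ln\frac{u-v}{\sqrt2}\\&-(\theta_1-\theta_+)(\theta_2-\theta_3)(\theta_1-\theta_-)\ln(\theta-\theta_1)\\&-(\theta_2-\theta_+)(\theta_2-\theta_-)(\theta_3-\theta_1)\ln(\theta-\theta_2)\\&-(\theta_1-\theta_2)(\theta_3-\theta_+)(\theta_3-\theta_-)\ln(\theta-\theta_3).\end{aligned}$$ Then $h$ is constant along every solution curve contained in $\Omega$ of $$u'=\frac{c}{u-v}+\frac{b}{u-w},\quad v'=\frac{a}{v-w}+\frac{c}{v-u},\quad w'=\frac{b}{w-u}+\frac{a}{w-v}.$$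
   Context: The roots $\theta_\pm,\theta_i$ may be complex, in which case $h$ is complex-valued and the logarithms are continuous complex branches on $\Omega$. *)

From Stdlib Require Import Reals.
From Coquelicot Require Import Coquelicot.
Open Scope R_scope.

Definition pt3 := (R * R * R)%type.
Definition pu (p : pt3) : R := fst (fst p).
Definition pv (p : pt3) : R := snd (fst p).
Definition pw (p : pt3) : R := snd p.

Definition theta (p : pt3) : R :=
  (pu p + pv p - 2 * pw p) / (sqrt 3 * (pu p - pv p)).

Definition cexp (z : C) : C :=
  (exp (Re z) * cos (Im z), exp (Re z) * sin (Im z)).

Definition log_branch (D : pt3 -> Prop) (f : pt3 -> C) (L : pt3 -> C) : Prop :=
  forall p, D p -> continuous L p /\ cexp (L p) = f p.

Definition connected3 (D : pt3 -> Prop) : Prop :=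
  forall A B : pt3 -> Prop, open A -> open B ->
    (forall p, D p -> A p \/ B p) ->
    (forall p, D p -> A p -> B p -> False) ->
    (exists p, D p /\ A p) -> (exists p, D p /\ B p) -> False.

(* the function h, built from chosen branches L0..L3 of the logarithms of
   (u-v)/sqrt 2, theta-theta1, theta-theta2, theta-theta3 *)
Definition hfun (tp tm t1 t2 t3 : C) (L0 L1 L2 L3 : pt3 -> C) (p : pt3) : C :=
  ((t1 - t2) * (t2 - t3) * (t3 - t1) * L0 p
   - (t1 - tp) * (t2 - t3) * (t1 - tm) * L1 p
   - (t2 - tp) * (t2 - tm) * (t3 - t1) * L2 p
   - (t1 - t2) * (t3 - tp) * (t3 - tm) * L3 p)%C.

(* Along a solution write X = (u' - v')/(u - v) and theta' for the derivative of
   theta.  With theta = sqrt 3 * r, a rational identity in u, v, w gives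
   X * cubic(theta) + theta' * quad(theta) = 0, i.e. (ln (u - v))' is
   -theta' * quad(theta)/cubic(theta).  Since the roots theta_1, theta_2, theta_3
   of the cubic are distinct, Lagrange interpolation of the quadratic at them
   splits quad/cubic into partial fractions whose residues, multiplied by
   (theta_1 - theta_2)(theta_2 - theta_3)(theta_3 - theta_1), are the coefficients
   of h.  A continuous branch of log g has derivative g'/g, so h' = 0 along the
   solution, and h is constant on its interval of definition. *)

From Stdlib Require Import Reals Lra Nsatz.
From Coquelicot Require Import Coquelicot.
Open Scope R_scope.

(* Coquelicot states equalities in [AbsRing.sort R_AbsRing], which [ring] and
   [field] do not recognize. *)
Ltac eq_R := match goal with |- ?x = ?y => change (@eq R x y) end.

Definition is_derive_C (f : R -> C) (t : R) (z : C) : Prop :=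
  is_derive (fun s => Re (f s)) t (Re z) /\ is_derive (fun s => Im (f s)) t (Im z).

Lemma is_derive_C_RtoC (f : R -> R) t d :
  is_derive f t d -> is_derive_C (fun s => RtoC (f s)) t (RtoC d).
Proof. intros Df. split; [exact Df | exact (is_derive_const (V := R_NormedModule) _ _)]. Qed.

Lemma is_derive_C_minus (f g : R -> C) t df dg :
  is_derive_C f t df -> is_derive_C g t dg ->
  is_derive_C (fun s => (f s - g s)%C) t (df - dg)%C.
Proof.
intros [Df1 Df2] [Dg1 Dg2].
split; [exact (is_derive_minus _ _ _ _ _ Df1 Dg1) | exact (is_derive_minus _ _ _ _ _ Df2 Dg2)].
Qed.

Lemma is_derive_C_minus_const (f : R -> C) t df (k : C) :
  is_derive_C f t df -> is_derive_C (fun s => (f s - k)%C) t df.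
Proof.
intros [Df1 Df2]. split.
- apply (is_derive_ext (fun s => Re (f s) - Re k)); [reflexivity|].
  replace (Re df) with (Re df - 0) by ring.
  exact (is_derive_minus _ _ _ _ _ Df1 (is_derive_const _ _)).
- apply (is_derive_ext (fun s => Im (f s) - Im k)); [reflexivity|].
  replace (Im df) with (Im df - 0) by ring.
  exact (is_derive_minus _ _ _ _ _ Df2 (is_derive_const _ _)).
Qed.

Lemma is_derive_C_scal (k : C) (f : R -> C) t df :
  is_derive_C f t df -> is_derive_C (fun s => (k * f s)%C) t (k * df)%C.
Proof.
intros [Df1 Df2]. split.
- apply (is_derive_ext (fun s => Re k * Re (f s) - Im k * Im (f s))); [reflexivity|].
  exact (is_derive_minus _ _ _ _ _ (is_derive_scal _ _ _ _ Df1) (is_derive_scal _ _ _ _ Df2)).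
- apply (is_derive_ext (fun s => Re k * Im (f s) + Im k * Re (f s))); [reflexivity|].
  exact (is_derive_plus _ _ _ _ _ (is_derive_scal _ _ _ _ Df2) (is_derive_scal _ _ _ _ Df1)).
Qed.

Lemma polar_modulus (r phi : R) :
  (exp r * cos phi) ^ 2 + (exp r * sin phi) ^ 2 = exp (2 * r).
Proof.
pose proof (sin2_cos2 phi) as E. unfold Rsqr in E.
replace (2 * r) with (r + r) by ring. rewrite exp_plus. nra.
Qed.

Section PolarDerivative.

Variables (gx gy r phi : R -> R) (t dx dy : R).
Hypotheses (Dx : is_derive gx t dx) (Dy : is_derive gy t dy).
Hypothesis polar : locally t (fun s =>
  exp (r s) * cos (phi s) = gx s /\ exp (r s) * sin (phi s) = gy s).

Let Derive_gx : Derive (fun s : R => gx s) t = dx.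
Proof. exact (is_derive_unique _ _ _ Dx). Qed.
Let Derive_gy : Derive (fun s : R => gy s) t = dy.
Proof. exact (is_derive_unique _ _ _ Dy). Qed.

Lemma polar_modulus_pos : 0 < gx t ^ 2 + gy t ^ 2.
Proof.
destruct (locally_singleton _ _ polar) as [<- <-].
rewrite polar_modulus. apply exp_pos.
Qed.

Lemma is_derive_polar_radius :
  is_derive r t ((dx * gx t + dy * gy t) / (gx t ^ 2 + gy t ^ 2)).
Proof.
pose proof polar_modulus_pos.
apply is_derive_ext_loc with (fun s => ln (gx s ^ 2 + gy s ^ 2) / 2).
- apply filter_imp with (2 := polar). intros s [<- <-].
  rewrite polar_modulus, ln_exp. eq_R; field.
- auto_derive.
  + repeat split; try (eexists; eassumption). lra.
  + rewrite Derive_gx, Derive_gy.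
    eq_R; field. lra.
Qed.

Lemma is_derive_polar_angle : continuous phi t ->
  is_derive phi t ((dy * gx t - dx * gy t) / (gx t ^ 2 + gy t ^ 2)).
Proof.
intros Cphi. pose proof polar_modulus_pos.
destruct (locally_singleton _ _ polar) as [Ex Ey].
assert (near : locally t (fun s => Rabs (phi s - phi t) < PI / 2)).
{ assert (HP : 0 < PI / 2) by (pose proof PI_RGT_0; lra).
  apply (Cphi (fun y => Rabs (y - phi t) < PI / 2)).
  exists (mkposreal _ HP). intros y Hy. exact Hy. }
(* Near t the angle stays within PI/2 of phi t, so it is phi t plus the atan
   of the ratio of the cross and dot products of g s and g t. *)
apply is_derive_ext_loc with
  (fun s => phi t + atan ((gy s * gx t - gx s * gy t) / (gx s * gx t + gy s * gy t))).
- apply filter_imp with (2 := filter_and _ _ polar near).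
  intros s [[<- <-] Hs]. rewrite <- Ex, <- Ey.
  assert (Hd : - (PI / 2) < phi s - phi t < PI / 2) by (apply Rabs_def2 in Hs; lra).
  assert (Hcos : 0 < cos (phi s - phi t)) by (apply cos_gt_0; lra).
  pose proof (exp_pos (r s)) as Ers. pose proof (exp_pos (r t)) as Ert.
  replace (_ / _) with (tan (phi s - phi t)).
  + rewrite atan_tan by lra. eq_R; ring.
  + pose proof (Rmult_lt_0_compat _ _ (Rmult_lt_0_compat _ _ Ers Ert) Hcos).
    unfold tan. rewrite sin_minus, cos_minus in *. eq_R; field. split; nra.
- auto_derive.
  + repeat split; try (eexists; eassumption). nra.
  + rewrite Derive_gx, Derive_gy.
    eq_R; field. split; nra.
Qed.

End PolarDerivative.

Lemma Re_Cdiv (z w : C) : Re (z / w) = (Re z * Re w + Im z * Im w) / (Re w ^ 2 + Im w ^ 2).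
Proof. destruct z, w. simpl. unfold Rdiv. ring. Qed.

Lemma Im_Cdiv (z w : C) : Im (z / w) = (Im z * Re w - Re z * Im w) / (Re w ^ 2 + Im w ^ 2).
Proof. destruct z, w. simpl. unfold Rdiv. ring. Qed.

Lemma is_derive_C_log (l g : R -> C) t g' :
  is_derive_C g t g' -> continuous (fun s => Im (l s)) t ->
  locally t (fun s => cexp (l s) = g s) -> is_derive_C l t (g' / g t)%C.
Proof.
intros [Dx Dy] Cim Hl.
assert (polar : locally t (fun s => exp (Re (l s)) * cos (Im (l s)) = Re (g s)
                                 /\ exp (Re (l s)) * sin (Im (l s)) = Im (g s))).
{ apply filter_imp with (2 := Hl). intros s <-. split; reflexivity. }
split; [rewrite Re_Cdiv | rewrite Im_Cdiv].
- exact (is_derive_polar_radius _ _ _ _ _ _ _ Dx Dy polar).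
- exact (is_derive_polar_angle _ _ _ _ _ _ _ Dx Dy polar Cim).
Qed.

Definition flow_u (a b c : R) (p : pt3) : R := c / (pu p - pv p) + b / (pu p - pw p).
Definition flow_v (a b c : R) (p : pt3) : R := a / (pv p - pw p) + c / (pv p - pu p).
Definition flow_w (a b c : R) (p : pt3) : R := b / (pw p - pu p) + a / (pw p - pv p).

Definition theta_dot (a b c : R) (p : pt3) : R :=
  ((flow_u a b c p + flow_v a b c p - 2 * flow_w a b c p) * (pu p - pv p)
   - (pu p + pv p - 2 * pw p) * (flow_u a b c p - flow_v a b c p))
  / (sqrt 3 * (pu p - pv p) ^ 2).

Definition quad (a b c x : R) : R := -3 * c * x * x + sqrt 3 * (a - b) * x + (a + b + c).
Definition cubic (a b c x : R) : R :=
  -3 * c * x * x * x + sqrt 3 * (a - b) * x * x + (4 * a + 4 * b + c) * x + sqrt 3 * (a - b).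

Lemma quad_cubic_sqrt3 (a b c r : R) :
  quad a b c (sqrt 3 * r) = -9 * c * r * r + 3 * (a - b) * r + (a + b + c) /\
  cubic a b c (sqrt 3 * r)
  = sqrt 3 * (-9 * c * r * r * r + 3 * (a - b) * r * r + (4 * a + 4 * b + c) * r + (a - b)).
Proof.
assert (s3 : sqrt 3 * sqrt 3 = 3) by (apply sqrt_sqrt; lra).
unfold quad, cubic. split; nsatz.
Qed.

Lemma theta_dot_identity (a b c : R) (p : pt3) :
  pu p <> pv p -> pv p <> pw p -> pu p <> pw p ->
  (flow_u a b c p - flow_v a b c p) / (pu p - pv p) * cubic a b c (theta p)
  + theta_dot a b c p * quad a b c (theta p) = 0.
Proof.
destruct p as [[x y] z].
unfold theta, theta_dot, flow_u, flow_v, flow_w, pu, pv, pw; cbn [fst snd].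
intros Hxy Hyz Hxz.
assert (Hxy' : x - y <> 0) by lra.
assert (Hxz' : x - z <> 0) by lra.
assert (Hyz' : y - z <> 0) by lra.
set (s := sqrt 3).
assert (s3 : s * s = 3) by (apply sqrt_sqrt; lra).
assert (s0 : s <> 0) by (intro E; rewrite E in s3; lra).
set (U := c / (x - y) + b / (x - z)).
set (V := a / (y - z) + c / (y - x)).
set (W := b / (z - x) + a / (z - y)).
set (r := (x + y - 2 * z) / (3 * (x - y))).
set (r' := ((U + V - 2 * W) * (x - y) - (x + y - 2 * z) * (U - V)) / (3 * (x - y) ^ 2)).
(* [rewrite <- s3] turns the constant 3 into [s * s], leaving [field] a
   rational identity. *)
replace ((x + y - 2 * z) / (s * (x - y))) with (s * r)
  by (unfold r; rewrite <- s3; field; auto).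
replace (((U + V - 2 * W) * (x - y) - (x + y - 2 * z) * (U - V)) / (s * (x - y) ^ 2))
  with (s * r') by (unfold r'; rewrite <- s3; field; auto).
destruct (quad_cubic_sqrt3 a b c r) as [Q Cb]. fold s in Q, Cb. rewrite Q, Cb.
transitivity (s * ((U - V) / (x - y)
  * (-9 * c * r * r * r + 3 * (a - b) * r * r + (4 * a + 4 * b + c) * r + (a - b))
  + r' * (-9 * c * r * r + 3 * (a - b) * r + (a + b + c)))); [ring|].
replace (_ + _) with 0; [ring|].
unfold r, r', U, V, W. field. repeat split; lra.
Qed.

Section FlowDerivatives.

Variables (a b c : R) (u v w : R -> R) (t : R).
Let p := (u t, v t, w t).
Hypotheses (Du : is_derive u t (flow_u a b c p)) (Dv : is_derive v t (flow_v a b c p))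
           (Dw : is_derive w t (flow_w a b c p)).
Hypothesis Huv : u t <> v t.

Let Derive_u : Derive (fun s : R => u s) t = flow_u a b c p.
Proof. exact (is_derive_unique _ _ _ Du). Qed.
Let Derive_v : Derive (fun s : R => v s) t = flow_v a b c p.
Proof. exact (is_derive_unique _ _ _ Dv). Qed.
Let Derive_w : Derive (fun s : R => w s) t = flow_w a b c p.
Proof. exact (is_derive_unique _ _ _ Dw). Qed.

Lemma is_derive_diff_flow :
  is_derive (fun s => (u s - v s) / sqrt 2) t ((flow_u a b c p - flow_v a b c p) / sqrt 2).
Proof.
assert (0 < sqrt 2) by (apply sqrt_lt_R0; lra).
auto_derive.
- repeat split; eexists; eassumption.
- rewrite Derive_u, Derive_v. eq_R; field. lra.
Qed.

Lemma is_derive_theta_flow :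
  is_derive (fun s => theta (u s, v s, w s)) t (theta_dot a b c p).
Proof.
assert (0 < sqrt 3) by (apply sqrt_lt_R0; lra).
unfold theta, theta_dot, pu, pv, pw; cbn [fst snd].
auto_derive.
- repeat split; try (eexists; eassumption). apply Rmult_integral_contrapositive; lra.
- rewrite Derive_u, Derive_v, Derive_w. unfold p, pu, pv, pw; cbn [fst snd].
  eq_R; field. lra.
Qed.

End FlowDerivatives.

Lemma lagrange_quadratic (tp tm t1 t2 t3 z : C) :
  ((t1 - tp) * (t2 - t3) * (t1 - tm) * ((z - t2) * (z - t3))
   + (t2 - tp) * (t2 - tm) * (t3 - t1) * ((z - t1) * (z - t3))
   + (t1 - t2) * (t3 - tp) * (t3 - tm) * ((z - t1) * (z - t2)))%C
  = (- ((t1 - t2) * (t2 - t3) * (t3 - t1)) * ((z - tp) * (z - tm)))%C.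
Proof. ring. Qed.

Lemma hfun_coefficients_annihilate (X T z tp tm t1 t2 t3 : C) :
  z <> t1 -> z <> t2 -> z <> t3 ->
  (X * ((z - t1) * (z - t2) * (z - t3)) + T * ((z - tp) * (z - tm)))%C = 0%C ->
  ((t1 - t2) * (t2 - t3) * (t3 - t1) * X
   - (t1 - tp) * (t2 - t3) * (t1 - tm) * (T / (z - t1))
   - (t2 - tp) * (t2 - tm) * (t3 - t1) * (T / (z - t2))
   - (t1 - t2) * (t3 - tp) * (t3 - tm) * (T / (z - t3)))%C = 0%C.
Proof.
intros H1 H2 H3 HXT.
pose proof (Cminus_eq_contra _ _ H1) as N1.
pose proof (Cminus_eq_contra _ _ H2) as N2.
pose proof (Cminus_eq_contra _ _ H3) as N3.
set (P := ((z - t1) * (z - t2) * (z - t3))%C) in *.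
assert (NP : P <> 0%C) by (apply Cmult_neq_0; [apply Cmult_neq_0|]; assumption).
match goal with |- ?G = _ =>
  replace G with ((G * P) / P)%C by (field; repeat split; assumption);
  replace (G * P)%C with ((t1 - t2) * (t2 - t3) * (t3 - t1) * X * P
    - T * ((t1 - tp) * (t2 - t3) * (t1 - tm) * ((z - t2) * (z - t3))
           + (t2 - tp) * (t2 - tm) * (t3 - t1) * ((z - t1) * (z - t3))
           + (t1 - t2) * (t3 - tp) * (t3 - tm) * ((z - t1) * (z - t2))))%C
    by (unfold P; field; auto)
end.
rewrite lagrange_quadratic.
replace (_ - _)%C with ((t1 - t2) * (t2 - t3) * (t3 - t1)
  * (X * P + T * ((z - tp) * (z - tm))))%C by ring.
rewrite HXT. field. assumption.
Qed.

Lemma continuous_pair {U V W : UniformSpace} (f : U -> V) (g : U -> W) x :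
  continuous f x -> continuous g x -> continuous (fun y => (f y, g y)) x.
Proof.
intros Cf Cg. apply (continuous_comp_2 f g pair); [exact Cf | exact Cg |].
apply (continuous_ext (fun y => y)); [intros []; reflexivity | apply continuous_id].
Qed.

Lemma is_derive_C_log_branch (D : pt3 -> Prop) (f L : pt3 -> C) (g : R -> pt3) t df :
  log_branch D f L -> continuous g t -> locally t (fun s => D (g s)) ->
  is_derive_C (fun s => f (g s)) t df -> is_derive_C (fun s => L (g s)) t (df / f (g t))%C.
Proof.
intros HL Cg Dg Df.
apply (is_derive_C_log (fun s => L (g s)) (fun s => f (g s))); [exact Df | |].
- apply (continuous_comp g (fun q => Im (L q))); [exact Cg |].
  apply continuous_comp; [apply HL, (locally_singleton _ _ Dg) | apply continuous_snd].
- apply filter_imp with (2 := Dg). intros s Ds. exact (proj2 (HL _ Ds)).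
Qed.

Section FirstIntegral.

Variables (a b c : R) (tp tm t1 t2 t3 : C).
Hypothesis hc : c <> 0.
Hypothesis Hquad : forall z : C,
  (RtoC (-3 * c) * z * z + RtoC (sqrt 3 * (a - b)) * z + RtoC (a + b + c))%C
  = (RtoC (-3 * c) * (z - tp) * (z - tm))%C.
Hypothesis Hcubic : forall z : C,
  (RtoC (-3 * c) * z * z * z + RtoC (sqrt 3 * (a - b)) * z * z
   + RtoC (4 * a + 4 * b + c) * z + RtoC (sqrt 3 * (a - b)))%C
  = (RtoC (-3 * c) * (z - t1) * (z - t2) * (z - t3))%C.

Lemma theta_dot_identity_C (p : pt3) :
  pu p <> pv p -> pv p <> pw p -> pu p <> pw p ->
  let z := RtoC (theta p) in
  (RtoC ((flow_u a b c p - flow_v a b c p) / (pu p - pv p)) * ((z - t1) * (z - t2) * (z - t3))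
   + RtoC (theta_dot a b c p) * ((z - tp) * (z - tm)))%C = 0%C.
Proof.
intros Huv Hvw Huw z.
pose proof (theta_dot_identity a b c p Huv Hvw Huw) as Hid.
set (X := (flow_u a b c p - flow_v a b c p) / (pu p - pv p)) in *.
set (T := theta_dot a b c p) in *.
assert (Hc3 : RtoC (-3 * c) <> 0%C) by (intro E; apply (f_equal Re) in E; simpl in E; lra).
assert (Hpoly : (RtoC (-3 * c) * (RtoC X * ((z - t1) * (z - t2) * (z - t3))
                 + RtoC T * ((z - tp) * (z - tm))))%C
                = RtoC (X * cubic a b c (theta p) + T * quad a b c (theta p))).
{ replace (RtoC (-3 * c) * _)%C
    with (RtoC X * (RtoC (-3 * c) * (z - t1) * (z - t2) * (z - t3))
          + RtoC T * (RtoC (-3 * c) * (z - tp) * (z - tm)))%C by ring.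
  rewrite <- Hquad, <- Hcubic. unfold z, quad, cubic.
  apply injective_projections; simpl; ring. }
rewrite Hid in Hpoly.
match goal with |- ?G = _ =>
  replace G with (/ RtoC (-3 * c) * (RtoC (-3 * c) * G))%C by (field; exact Hc3) end.
rewrite Hpoly. apply injective_projections; simpl; ring.
Qed.

Variables (Om : pt3 -> Prop) (L0 L1 L2 L3 : pt3 -> C).
Hypothesis HOmdist : forall p, Om p -> pu p <> pv p /\ pv p <> pw p /\ pu p <> pw p.
Hypothesis HOmtheta : forall p, Om p ->
  RtoC (theta p) <> t1 /\ RtoC (theta p) <> t2 /\ RtoC (theta p) <> t3.
Hypotheses (HL0 : log_branch Om (fun p => RtoC ((pu p - pv p) / sqrt 2)) L0)
  (HL1 : log_branch Om (fun p => (RtoC (theta p) - t1)%C) L1)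
  (HL2 : log_branch Om (fun p => (RtoC (theta p) - t2)%C) L2)
  (HL3 : log_branch Om (fun p => (RtoC (theta p) - t3)%C) L3).

Lemma is_derive_C_hfun_flow (u v w : R -> R) t :
  let p := (u t, v t, w t) in
  locally t (fun s => Om (u s, v s, w s)) ->
  is_derive u t (flow_u a b c p) -> is_derive v t (flow_v a b c p) ->
  is_derive w t (flow_w a b c p) ->
  is_derive_C (fun s => hfun tp tm t1 t2 t3 L0 L1 L2 L3 (u s, v s, w s)) t 0%C.
Proof.
intros p near Du Dv Dw.
destruct (HOmdist p (locally_singleton _ _ near)) as [Huv [Hvw Huw]].
destruct (HOmtheta p (locally_singleton _ _ near)) as [Ht1 [Ht2 Ht3]].
assert (Cp : continuous (fun s => (u s, v s, w s)) t).
{ repeat apply continuous_pair.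
  - exact (ex_derive_continuous u t (ex_intro _ _ Du)).
  - exact (ex_derive_continuous v t (ex_intro _ _ Dv)).
  - exact (ex_derive_continuous w t (ex_intro _ _ Dw)). }
pose proof (is_derive_C_log_branch _ _ _ _ _ _ HL0 Cp near
  (is_derive_C_RtoC _ _ _ (is_derive_diff_flow a b c u v w t Du Dv))) as D0.
assert (Dtheta := fun tk => is_derive_C_minus_const _ _ _ tk
  (is_derive_C_RtoC _ _ _ (is_derive_theta_flow a b c u v w t Du Dv Dw Huv))).
pose proof (is_derive_C_log_branch _ _ _ _ _ _ HL1 Cp near (Dtheta t1)) as D1.
pose proof (is_derive_C_log_branch _ _ _ _ _ _ HL2 Cp near (Dtheta t2)) as D2.
pose proof (is_derive_C_log_branch _ _ _ _ _ _ HL3 Cp near (Dtheta t3)) as D3.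
rewrite <- (hfun_coefficients_annihilate
  (RtoC ((flow_u a b c p - flow_v a b c p) / (pu p - pv p))) (RtoC (theta_dot a b c p))
  (RtoC (theta p)) tp tm t1 t2 t3 Ht1 Ht2 Ht3 (theta_dot_identity_C p Huv Hvw Huw)).
replace (RtoC ((flow_u a b c p - flow_v a b c p) / (pu p - pv p)))
  with (RtoC ((flow_u a b c p - flow_v a b c p) / sqrt 2) / RtoC ((pu p - pv p) / sqrt 2))%C.
- repeat apply is_derive_C_minus; apply is_derive_C_scal; assumption.
- assert (0 < sqrt 2) by (apply sqrt_lt_R0; lra).
  assert (pu p - pv p <> 0) by lra.
  rewrite <- RtoC_div; [f_equal; field; lra |].
  unfold Rdiv. apply Rmult_integral_contrapositive_currified; [lra | apply Rinv_neq_0_compat; lra].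
Qed.

End FirstIntegral.

Lemma is_derive_zero_const_interval (f : R -> R) (alpha beta : R) :
  (forall t, alpha < t < beta -> is_derive f t 0) ->
  forall s t, alpha < s < beta -> alpha < t < beta -> f s = f t.
Proof.
intros D0.
assert (lt_case : forall s t, alpha < s < beta -> alpha < t < beta -> s < t -> f s = f t).
{ intros s t Hs Ht Hst. apply eq_is_derive; [intros x Hx; apply D0; lra | exact Hst]. }
intros s t Hs Ht. destruct (Rtotal_order s t) as [Hst | [-> | Hts]].
- exact (lt_case s t Hs Ht Hst).
- reflexivity.
- symmetry. exact (lt_case t s Ht Hs Hts).
Qed.

Lemma is_derive_C_zero_const_interval (f : R -> C) (alpha beta : R) :
  (forall t, alpha < t < beta -> is_derive_C f t 0%C) ->
  forall s t, alpha < s < beta -> alpha < t < beta -> f s = f t.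
Proof.
intros D0 s t Hs Ht. apply injective_projections.
- exact (is_derive_zero_const_interval (fun r => Re (f r)) alpha beta
    (fun r Hr => proj1 (D0 r Hr)) s t Hs Ht).
- exact (is_derive_zero_const_interval (fun r => Im (f r)) alpha beta
    (fun r Hr => proj2 (D0 r Hr)) s t Hs Ht).
Qed.

Theorem mainTheorem9
  (a b c : R) (hc : c <> 0)
  (tp tm t1 t2 t3 : C)
  (Hquad : forall z : C,
     (RtoC (-3 * c) * z * z + RtoC (sqrt 3 * (a - b)) * z + RtoC (a + b + c))%C
     = (RtoC (-3 * c) * (z - tp) * (z - tm))%C)
  (Hcubic : forall z : C,
     (RtoC (-3 * c) * z * z * z + RtoC (sqrt 3 * (a - b)) * z * z
      + RtoC (4 * a + 4 * b + c) * z + RtoC (sqrt 3 * (a - b)))%C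
     = (RtoC (-3 * c) * (z - t1) * (z - t2) * (z - t3))%C)
  (H12 : t1 <> t2) (H23 : t2 <> t3) (H13 : t1 <> t3)
  (Om : pt3 -> Prop) (HOmopen : open Om) (HOmconn : connected3 Om)
  (HOmdist : forall p, Om p ->
     pu p <> pv p /\ pv p <> pw p /\ pu p <> pw p)
  (HOmtheta : forall p, Om p ->
     RtoC (theta p) <> t1 /\ RtoC (theta p) <> t2 /\ RtoC (theta p) <> t3)
  (L0 L1 L2 L3 : pt3 -> C)
  (HL0 : log_branch Om (fun p => RtoC ((pu p - pv p) / sqrt 2)) L0)
  (HL1 : log_branch Om (fun p => (RtoC (theta p) - t1)%C) L1)
  (HL2 : log_branch Om (fun p => (RtoC (theta p) - t2)%C) L2)
  (HL3 : log_branch Om (fun p => (RtoC (theta p) - t3)%C) L3) :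
  forall (alpha beta : R) (u v w : R -> R),
    (forall t, alpha < t < beta ->
       Om (u t, v t, w t) /\
       is_derive u t (c / (u t - v t) + b / (u t - w t)) /\
       is_derive v t (a / (v t - w t) + c / (v t - u t)) /\
       is_derive w t (b / (w t - u t) + a / (w t - v t))) ->
    forall s t, alpha < s < beta -> alpha < t < beta ->
      hfun tp tm t1 t2 t3 L0 L1 L2 L3 (u s, v s, w s)
      = hfun tp tm t1 t2 t3 L0 L1 L2 L3 (u t, v t, w t).
Proof.
intros alpha beta u v w flow.
apply is_derive_C_zero_const_interval.
intros t Ht. destruct (flow t Ht) as [_ [Du [Dv Dw]]].
apply (is_derive_C_hfun_flow a b c tp tm t1 t2 t3 hc Hquad Hcubic Om L0 L1 L2 L3
         HOmdist HOmtheta HL0 HL1 HL2 HL3); [| exact Du | exact Dv | exact Dw].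
apply filter_imp with (fun s => alpha < s < beta); [intros s Hs; exact (proj1 (flow s Hs)) |].
exact (open_and _ _ (open_gt alpha) (open_lt beta) t Ht).
Qed.
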